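(* For every $n \ge 3$, a flow-evaluation scheme for $(2,1)$-Group-Cut on graphs with $n$ terminals (in which $T=V$) and with edge-weights bounded by a polynomial in $n$ requires storage of $\Omega(n^2 \log n)$ bits.
   Context: $G=(V,E,w)$ is an undirected graph with integer edge weights. For a partition $\Pi$, $\mathrm{cut}_G(\Pi)=\sum_{uv\in E:\Pi(u)\neq\Pi(v)} w(uv)$; a partition agrees with demand graph $D$ if it separates every pair in $D$; $\mathrm{mincut}_G(D)$ is the minimum of $\mathrm{cut}_G(\Pi)$ over partitions of $V$ agreeing with $D$. $(2,1)$-Group-Cut is the family of demand graphs $K_{A,B}$ (complete bipartite between disjoint $A,B\subseteq T$) with $|A|=2$, $|B|=1$. A flow-evaluation scheme is a data structure with a preprocessing operation that takes $G$, terminals $T\subseteq V$, and a family $\mathcal D$ of demand graphs on $T$ and builds a data structure, and a query operation that given $D\in\mathcal D$ outputs $\mathrm{mincut}_G(D)$ using only the data structure (no access to $G$). *)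

From mathcomp Require Import all_boot.
Set Implicit Arguments. Unset Strict Implicit. Unset Printing Implicit Defensive.

(* An undirected graph on vertex set V = 'I_n (all vertices are terminals, T = V)
   with nonnegative integer edge weights: the weight of edge {i,j} is G (i,j);
   weight 0 means "no edge".  Only well-formed G (symmetric, zero diagonal)
   are considered, see [wf_graph]. *)
Definition graph (n : nat) := {ffun 'I_n * 'I_n -> nat}.

Definition wf_graph n (W : nat) (G : graph n) : Prop :=
  (forall i j : 'I_n, G (i, j) = G (j, i)) /\
  (forall i : 'I_n, G (i, i) = 0) /\
  (forall i j : 'I_n, G (i, j) <= W).

(* A partition of V, given by a labelling of vertices (n labels suffice). *)
Definition partition n := {ffun 'I_n -> 'I_n}.

Definition cut n (G : graph n) (P : partition n) : nat :=
  \sum_(p : 'I_n * 'I_n | (p.1 < p.2) && (P p.1 != P p.2)) G p.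

(* Demand graph K_{A,B} with A = {a1, a2}, B = {b}: a partition agrees with it
   iff it separates every pair (a, b) with a in A. *)
Definition agrees n (P : partition n) (a1 a2 b : 'I_n) : bool :=
  (P a1 != P b) && (P a2 != P b).

(* Total weight: an upper bound on every cut, used as neutral element. *)
Definition total_weight n (G : graph n) : nat :=
  \sum_(p : 'I_n * 'I_n | p.1 < p.2) G p.

Definition mincut n (G : graph n) (a1 a2 b : 'I_n) : nat :=
  \big[minn/total_weight G]_(P : partition n | agrees P a1 a2 b) cut G P.

Definition group_cut_21_query n (a1 a2 b : 'I_n) : bool :=
  [&& a1 != a2, a1 != b & a2 != b].

From Pilot Require Import Defs.
From mathcomp Require Import all_boot all_order zify.
Set Implicit Arguments. Unset Strict Implicit. Unset Printing Implicit Defensive.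
Import Order.TTheory.

(* Take a hub and two disjoint sides of [(n - 1) / 2] vertices each, and give
   every left-right pair an arbitrary weight of [2 lg n] bits.  Spokes from the
   hub pad every other vertex to the same degree [D] and are so heavy that a
   minimum cut separating a left vertex [u] and a right vertex [v] from the hub
   isolates exactly {u, v}; its value [2 D - 2 w(uv)] reveals the weight of
   [uv].  So the stored bits determine [2 lg n * ((n - 1) / 2)^2] bits of
   weights, and by counting some graph needs at least half as many. *)

Section Cut.
Variables (n : nat) (G : graph n).
Hypothesis G_sym : forall i j : 'I_n, G (i, j) = G (j, i).

Definition boundary (S : {set 'I_n}) : nat := \sum_(i in S) \sum_(j in ~: S) G (i, j).

Lemma cut_le_total_weight (P : Defs.partition n) : cut G P <= total_weight G.
Proof.
rewrite /cut /total_weight [X in _ <= X]big_mkcond [X in X <= _]big_mkcond.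
by apply: leq_sum => p _; case: (_ < _); case: (_ != _).
Qed.

Lemma sum_swap (Q : pred ('I_n * 'I_n)) :
  \sum_(p | Q p) G p = \sum_(p | Q (p.2, p.1)) G p.
Proof.
rewrite (reindex_inj (h := fun p : 'I_n * 'I_n => (p.2, p.1))) /=; last first.
  by move=> [a b] [c d] [-> ->].
by apply: eq_bigr => -[i j] _; rewrite G_sym.
Qed.

Lemma cut_double (P : Defs.partition n) : 2 * cut G P = \sum_(p | P p.1 != P p.2) G p.
Proof.
rewrite (bigID (fun p : 'I_n * 'I_n => p.1 < p.2)) /= mul2n -addnn /cut.
congr (_ + _); first by apply: eq_bigl => p; rewrite andbC.
rewrite sum_swap; apply: eq_bigl => -[i j] /=; rewrite eq_sym.
by case: ltngtP => [_|_|/val_inj ->]; rewrite ?andbF ?andbT ?eqxx.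
Qed.

Lemma boundary_double (S : {set 'I_n}) :
  2 * boundary S = \sum_(p | (p.1 \in S) != (p.2 \in S)) G p.
Proof.
rewrite (bigID (fun p : 'I_n * 'I_n => p.1 \in S)) /= mul2n -addnn.
have out_in : boundary S = \sum_(p | (p.1 \in S) && (p.2 \notin S)) G p.
  by rewrite /boundary pair_big_dep; apply: eq_big => -[i j]; rewrite ?inE.
congr (_ + _); rewrite out_in.
  by apply: eq_bigl => -[i j] /=; case: (i \in S); case: (j \in S).
by rewrite sum_swap; apply: eq_bigl => -[i j] /=; case: (i \in S); case: (j \in S).
Qed.

Lemma boundary_le_cut (S : {set 'I_n}) (P : Defs.partition n) :
  (forall i j, i \in S -> j \notin S -> P i != P j) -> boundary S <= cut G P.
Proof.
move=> sep; rewrite -(leq_pmul2l (isT : 0 < 2)) cut_double boundary_double.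
rewrite [X in _ <= X]big_mkcond [X in X <= _]big_mkcond; apply: leq_sum => -[i j] _ /=.
case: (boolP (i \in S)); case: (boolP (j \in S)) => //= jS iS.
- by rewrite sep.
- by rewrite eq_sym sep.
Qed.

Lemma cut_eq_boundary (S : {set 'I_n}) (P : Defs.partition n) :
  (forall i j, (P i != P j) = ((i \in S) != (j \in S))) -> cut G P = boundary S.
Proof.
move=> sepS; apply/eqP; rewrite -(eqn_pmul2l (isT : 0 < 2)).
by rewrite cut_double boundary_double; apply/eqP/eq_bigl => -[i j]; rewrite sepS.
Qed.

Lemma row_le_boundary (S : {set 'I_n}) i :
  i \in S -> \sum_(j in ~: S) G (i, j) <= boundary S.
Proof. by move=> iS; rewrite /boundary [X in _ <= X](bigD1 i) //= leq_addr. Qed.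

Hypothesis G_diag : forall i : 'I_n, G (i, i) = 0.

Lemma boundary_pair u v : u != v ->
  boundary [set u; v] + 2 * G (u, v) = \sum_j G (u, j) + \sum_j G (v, j).
Proof.
move=> uv; have vu : v \notin [set u] by rewrite inE eq_sym.
have -> : [set u; v] = v |: [set u] by rewrite setUC.
have row i : \sum_j G (i, j) = G (i, v) + G (i, u) + \sum_(j in ~: (v |: [set u])) G (i, j).
  rewrite (bigID (mem (v |: [set u]))) /= (big_setU1 _ vu) big_set1.
  by congr (_ + _); apply: eq_bigl => j; rewrite !inE.
rewrite /boundary (big_setU1 _ vu) big_set1 /= !row !G_diag (G_sym v u).
by rewrite addn0 add0n addnACA addnn -mul2n addnC [_ + \sum_(j in _) _]addnC.
Qed.

End Cut.

Lemma leq_sum_uniq_sub (I : finType) (s : seq I) (A : {pred I}) (F : I -> nat) :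
  uniq s -> {subset s <= A} -> \sum_(i <- s) F i <= \sum_(i in A) F i.
Proof.
move=> s_uniq sA; rewrite big_uniq // [X in _ <= X]big_mkcond [X in X <= _]big_mkcond.
by apply: leq_sum => i _; case: ifP => // /sA ->.
Qed.

Section HubMincut.
Variables (n : nat) (G : graph n) (u v h : 'I_n) (M : nat).
Hypothesis G_sym : forall i j : 'I_n, G (i, j) = G (j, i).
Hypotheses (uv : u != v) (uh : u != h) (vh : v != h).
Hypothesis hub_heavy : forall j, j != h -> M <= G (h, j).
Hypothesis pair_light : boundary G [set u; v] <= 3 * M.

(* If every vertex other than [u] and [v] lies on the side of [h], the cut
   contains the boundary of {u, v}; otherwise it contains three spokes at [h]. *)
Lemma agrees_boundary_le_cut (P : Defs.partition n) :
  agrees P u v h -> boundary G [set u; v] <= cut G P.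
Proof.
case/andP=> Pu Pv.
case: (boolP [forall j, (j \notin [set u; v]) ==> (P j == P h)]) => [/forallP rest | ].
  apply: boundary_le_cut => // i j iS /(implyP (rest j)) /eqP ->.
  by case/set2P: iS => ->.
case/forallPn=> t; rewrite negb_imply !inE negb_or => /andP [/andP [tu tv] Pt].
pose S := [set j | P j == P h].
have hS : h \in S by rewrite inE.
have three_spokes : 3 * M <= G (h, u) + G (h, v) + G (h, t).
  have ht : t != h by apply: contraNneq Pt => ->.
  rewrite !mulSn mul0n addn0 addnA.
  exact: leq_add (leq_add (hub_heavy uh) (hub_heavy vh)) (hub_heavy ht).
have S_le_cut : boundary G S <= cut G P.
  by apply: boundary_le_cut => // i j; rewrite !inE => /eqP ->; rewrite eq_sym.
apply: leq_trans pair_light (leq_trans three_spokes (leq_trans _ S_le_cut)).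
apply: leq_trans (row_le_boundary G hS).
have := @leq_sum_uniq_sub _ [:: u; v; t] (mem (~: S)) (fun j => G (h, j)).
rewrite !big_cons big_nil addn0 addnA; apply.
  by rewrite /= !inE negb_or uv eq_sym tu eq_sym tv.
by move=> j; rewrite !inE => /or3P [] /eqP ->.
Qed.

Lemma mincut_hub : mincut G u v h = boundary G [set u; v].
Proof.
pose P0 : Defs.partition n := [ffun i => if i \in [set u; v] then u else h].
have cut_P0 : cut G P0 = boundary G [set u; v].
  apply: cut_eq_boundary => // i j; rewrite !ffunE.
  by case: (i \in _); case: (j \in _); rewrite ?eqxx ?uh // eq_sym uh.
have agrees_P0 : agrees P0 u v h.
  by rewrite /agrees !ffunE !inE !eqxx orbT /= ![h == _]eq_sym (negbTE uh) (negbTE vh) uh.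
apply/eqP; rewrite eqn_leq /mincut -minEnat -!leEnat; apply/andP; split.
  by rewrite -cut_P0; apply: bigmin_le_cond.
apply: le_bigmin => [|P]; rewrite leEnat; last exact: agrees_boundary_le_cut.
by rewrite -cut_P0 cut_le_total_weight.
Qed.

End HubMincut.

Section Counting.
Variables (A : finType) (enc : A -> seq bool) (L : nat).
Hypothesis enc_inj : injective enc.

Lemma card_short_codes : (forall x, size (enc x) < L) -> #|A| <= L * 2 ^ L.
Proof.
move=> short; pose code x : 'I_L * {ffun 'I_L -> bool} :=
  (Ordinal (short x), [ffun k : 'I_L => nth false (enc x) k]).
have code_inj : injective code.
  move=> x y [size_xy bits_xy]; apply: enc_inj.
  apply: (eq_from_nth (x0 := false) size_xy) => i ix.
  have iL : i < L := ltn_trans ix (short x).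
  by have := congr1 (fun g : {ffun _ -> _} => g (Ordinal iL)) bits_xy; rewrite !ffunE.
by have := leq_card code code_inj; rewrite card_prod card_ffun !card_ord card_bool.
Qed.

Lemma exists_long_code : L * 2 ^ L < #|A| -> exists x, L <= size (enc x).
Proof.
move=> many; apply/existsP; apply: contraLR many => /existsPn short.
by rewrite -leqNgt card_short_codes // => x; rewrite ltnNge short.
Qed.

End Counting.

Section Construction.
Variable n : nat.

Definition side : nat := (n - 1) %/ 2.
Definition lg : nat := trunc_log 2 n.

Lemma left_lt (a : 'I_side) : a.+1 < n.
Proof. have := ltn_ord a; rewrite /side; lia. Qed.

Lemma right_lt (b : 'I_side) : side + b.+1 < n.
Proof. have := ltn_ord b; rewrite /side; lia. Qed.

Definition left_vertex (a : 'I_side) : 'I_n := Ordinal (left_lt a).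
Definition right_vertex (b : 'I_side) : 'I_n := Ordinal (right_lt b).

Lemma left_vertex_inj : injective left_vertex.
Proof. by move=> a a' /(congr1 val) [] /val_inj. Qed.

Lemma right_vertex_inj : injective right_vertex.
Proof. by move=> b b' /(congr1 val) /= /eqP; rewrite eqn_add2l eqSS => /eqP /val_inj. Qed.

Lemma left_neq_right a b : left_vertex a != right_vertex b.
Proof. by apply/eqP => /(congr1 val) /=; have := ltn_ord a; lia. Qed.

Hypothesis n_ge3 : 3 <= n.

Lemma n_le_6side : n <= 6 * side.
Proof. rewrite /side; lia. Qed.

Definition hub : 'I_n := Ordinal (leq_trans (isT : 0 < 3) n_ge3).

Lemma left_neq_hub a : left_vertex a != hub.
Proof. by []. Qed.

Lemma right_neq_hub b : right_vertex b != hub.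
Proof. by rewrite /right_vertex /hub -val_eqE /= addnS. Qed.

Definition weights := {ffun 'I_side * 'I_side -> 'I_(2 ^ (2 * lg))}.

Lemma card_weights : #|weights| = 2 ^ (2 * lg * side ^ 2).
Proof. by rewrite card_ffun card_prod !card_ord -expnM. Qed.

Definition bip_cap : nat := 2 * n ^ 5.

Section HubGraph.
Variable f : weights.

Definition bip (i j : 'I_n) : nat :=
  \sum_(e | (i == left_vertex e.1) && (j == right_vertex e.2)) f e
  + \sum_(e | (j == left_vertex e.1) && (i == right_vertex e.2)) f e.

Definition bip_degree (i : 'I_n) : nat := \sum_j bip i j.

Definition spoke (i : 'I_n) : nat := 3 * bip_cap - bip_degree i.

Definition hub_graph : graph n := [ffun p => bip p.1 p.2 +
  if p.1 == hub then (if p.2 == hub then 0 else spoke p.2)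
  else if p.2 == hub then spoke p.1 else 0].

Lemma weight_le e : f e <= n ^ 2.
Proof.
apply: leq_trans (ltnW (ltn_ord (f e))) _.
by rewrite mulnC expnM leq_exp2r // trunc_logP //; lia.
Qed.

Lemma sum_weights_le (Q : pred ('I_side * 'I_side)) : \sum_(e | Q e) f e <= n ^ 4.
Proof.
apply: (@leq_trans (\sum_(e | Q e) n ^ 2)); first by apply: leq_sum => e _; apply: weight_le.
rewrite sum_nat_const; apply: leq_trans (leq_mul (max_card _) (leqnn _)) _.
rewrite card_prod card_ord (_ : 4 = 2 + 2) // expnD leq_mul2r.
have side_le : side <= n by rewrite /side; lia.
by rewrite leq_mul ?orbT.
Qed.

Lemma bip_sym i j : bip i j = bip j i.
Proof. by rewrite /bip addnC. Qed.

Lemma bip_diag i : bip i i = 0.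
Proof.
rewrite /bip !big_pred0 // => e; apply/andP => -[/eqP -> /eqP lr].
by move: (left_neq_right e.1 e.2); rewrite lr eqxx.
Qed.

Lemma bip_hub j : bip hub j = 0.
Proof.
by rewrite /bip !big_pred0 // => e; rewrite -!val_eqE /= addnS ?andbF.
Qed.

Lemma bip_left_right a b : bip (left_vertex a) (right_vertex b) = f (a, b).
Proof.
rewrite /bip [X in _ + X]big_pred0 => [|e]; last first.
  by apply/andP => -[/eqP/esym/eqP]; rewrite (negbTE (left_neq_right _ _)).
rewrite addn0 (big_pred1 (a, b)) // => -[a' b'] /=.
rewrite /pred1 /= xpair_eqE (inj_eq left_vertex_inj) (inj_eq right_vertex_inj).
by rewrite (eq_sym a) (eq_sym b).
Qed.

Lemma bip_le i j : bip i j <= 2 * n ^ 4.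
Proof. by rewrite mul2n -addnn leq_add ?sum_weights_le. Qed.

Lemma bip_degree_le i : bip_degree i <= bip_cap.
Proof.
rewrite /bip_degree /bip_cap; apply: (@leq_trans (\sum_(j : 'I_n) 2 * n ^ 4)).
  by apply: leq_sum => j _; apply: bip_le.
by rewrite sum_nat_const card_ord mulnCA -expnS.
Qed.

Lemma hub_graph_sym i j : hub_graph (i, j) = hub_graph (j, i).
Proof. by rewrite !ffunE /= bip_sym; case: (i == hub); case: (j == hub). Qed.

Lemma hub_graph_diag i : hub_graph (i, i) = 0.
Proof. by rewrite ffunE /= bip_diag; case: (i == hub). Qed.

Lemma hub_graph_le i j : hub_graph (i, j) <= n ^ 7.
Proof.
have spoke_le k : spoke k <= 3 * bip_cap by apply: leq_subr.
have hub_part : (if i == hub then (if j == hub then 0 else spoke j)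
                 else if j == hub then spoke i else 0) <= 3 * bip_cap.
  by case: (i == hub); case: (j == hub).
rewrite ffunE /=; apply: leq_trans (leq_add (bip_le i j) hub_part) _.
have bip_small : 2 * n ^ 4 <= n ^ 5 by rewrite expnS leq_mul2r; apply/orP; right; lia.
apply: leq_trans (leq_add bip_small (leqnn _)) _.
rewrite /bip_cap mulnA -mulSn (_ : 7 = 2 + 5) // expnD leq_mul2r -mulnn.
apply/orP; right.
exact: leq_trans (leq_mul n_ge3 n_ge3).
Qed.

Lemma hub_graph_degree i : i != hub -> \sum_j hub_graph (i, j) = 3 * bip_cap.
Proof.
move=> ihub; rewrite (eq_bigr (fun j => bip i j + (if j == hub then spoke i else 0))); last first.
  by move=> j _; rewrite ffunE /= (negbTE ihub).
rewrite big_split /= -big_mkcond big_pred1_eq subnKC //.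
by apply: leq_trans (bip_degree_le i) _; rewrite leq_pmull.
Qed.

Lemma hub_graph_spoke_ge j : j != hub -> 2 * bip_cap <= hub_graph (hub, j).
Proof.
move=> jhub; rewrite ffunE /= bip_hub (negbTE jhub) add0n /spoke.
by rewrite (_ : 2 * bip_cap = 3 * bip_cap - bip_cap) ?leq_sub2l ?bip_degree_le // mulSn addKn.
Qed.

Lemma hub_graph_left_right a b : hub_graph (left_vertex a, right_vertex b) = f (a, b).
Proof.
by rewrite ffunE /= bip_left_right (negbTE (right_neq_hub b)) addn0.
Qed.

Lemma mincut_hub_graph a b :
  mincut hub_graph (left_vertex a) (right_vertex b) hub + 2 * f (a, b) = 2 * (3 * bip_cap).
Proof.
have pair := boundary_pair hub_graph_sym hub_graph_diag (left_neq_right a b).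
rewrite !hub_graph_degree ?left_neq_hub ?right_neq_hub // hub_graph_left_right in pair.
rewrite (@mincut_hub _ _ _ _ _ (2 * bip_cap)).
- by rewrite pair addnn mul2n.
- exact: hub_graph_sym.
- exact: left_neq_right.
- exact: left_neq_hub.
- exact: right_neq_hub.
- by move=> j; apply: hub_graph_spoke_ge.
- by rewrite mulnCA mul2n -addnn -pair leq_addr.
Qed.
End HubGraph.

Lemma hub_graph_wf f : wf_graph (n ^ 7) (hub_graph f).
Proof. by split; [exact: hub_graph_sym | split; [exact: hub_graph_diag | exact: hub_graph_le]]. Qed.

Lemma hub_graph_mincut_inj f1 f2 :
  (forall a b, mincut (hub_graph f1) (left_vertex a) (right_vertex b) hub
             = mincut (hub_graph f2) (left_vertex a) (right_vertex b) hub) ->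
  f1 = f2.
Proof.
move=> same; apply/ffunP => -[a b]; apply: val_inj; apply/eqP.
have := mincut_hub_graph f1 a b; rewrite same -(mincut_hub_graph f2 a b) => /eqP.
by rewrite eqn_add2l eqn_pmul2l.
Qed.

End Construction.

Theorem theorem14 :
  exists c k : nat, 0 < c /\
  forall n : nat, 3 <= n ->
  forall (enc : graph n -> seq bool)
         (dec : seq bool -> 'I_n -> 'I_n -> 'I_n -> nat),
  (forall G : graph n, wf_graph (n ^ k) G ->
     forall a1 a2 b : 'I_n, group_cut_21_query a1 a2 b ->
       dec (enc G) a1 a2 b = mincut G a1 a2 b) ->
  exists G : graph n, wf_graph (n ^ k) G /\
    n ^ 2 * trunc_log 2 n <= c * size (enc G).
Proof.
exists 36, 7; split=> // n n_ge3 enc dec dec_ok.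
pose L := lg n * side n ^ 2.
have code_inj : injective (fun f => enc (hub_graph n_ge3 f)).
  move=> f1 f2 /= same_code; apply: hub_graph_mincut_inj => a b.
  have query : group_cut_21_query (left_vertex a) (right_vertex b) (hub n_ge3).
    by rewrite /group_cut_21_query left_neq_right left_neq_hub right_neq_hub.
  by rewrite -!(dec_ok _ (hub_graph_wf n_ge3 _) _ _ _ query) same_code.
have [f long] : exists f, L <= size (enc (hub_graph n_ge3 f)).
  apply: exists_long_code code_inj _.
  rewrite card_weights -mulnA -/L mul2n -addnn expnD ltn_pmul2r ?expn_gt0 //.
  exact: ltn_expl.
exists (hub_graph n_ge3 f); split; first exact: hub_graph_wf.
apply: leq_trans (leq_mul (leqnn 36) long).
rewrite /L /lg mulnCA [X in X <= _]mulnC leq_mul2l; apply/orP; right.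
have n2 : n ^ 2 <= (6 * side n) ^ 2 by rewrite leq_exp2r ?n_le_6side.
by rewrite expnMn in n2.
Qed.
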